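(* Let $\rho\in\{1/2,1\}$, let $s>0$ and $\eta>0$ be real numbers, let $q\in\mathbb{C}$, and let $\epsilon$ be real with $1<\epsilon\le 1+\rho$. Define $\ell:(0,\infty)\to\mathbb{R}$ by $$\ell(\gamma) = -\rho\log(1+\gamma s) + \rho\,\frac{|q|^2}{\gamma^{-1}+s} + (\epsilon-1)\log\gamma - \eta\gamma .$$ Then $\ell$ has a single stationary point on $(0,\infty)$, and this stationary point corresponds to a maximum of $\ell$.
   Context: This function arises in a sparse Bayesian learning scheme: $\rho=1/2$ corresponds to a real signal model and $\rho=1$ to a complex one; $\epsilon$ is the shape parameter and $\eta$ the (positive) rate parameter of a gamma hyperprior; $s=\mathbf{h}^H\mathbf{C}^{-1}\mathbf{h}$ and $q=\mathbf{y}^H\mathbf{C}^{-1}\mathbf{h}$ for a nonzero vector $\mathbf{h}$, a vector $\mathbf{y}$, and a Hermitian positive definite matrix $\mathbf{C}$, so in particular $s>0$. The domain of $\ell$ is $(0,\infty)$. *)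

From Stdlib Require Import Reals.
From Coquelicot Require Import Coquelicot.
Open Scope R_scope.

Definition ell (rho s eta eps : R) (q : C) (g : R) : R :=
  - rho * ln (1 + g * s) + rho * ((Cmod q) ^ 2 / (/ g + s))
  + (eps - 1) * ln g - eta * g.

(* Clearing the denominator (1 + g s)^2 turns ell' into a function of the form
   a/g + b - p g - r g^2 with a = eps - 1 > 0 and p > 0, r > 0; the condition
   eps <= 1 + rho is exactly what makes p positive.  Such a function is strictly
   decreasing on (0, oo), positive near 0 and negative for large g, so ell'
   changes sign exactly once, from + to -, and the mean value theorem turns the
   stationary point into a global maximum. *)
From Stdlib Require Import Reals Lra Psatz.
From Coquelicot Require Import Coquelicot.
Open Scope R_scope.

Lemma derive_sign_change_max (f f' : R -> R) (a x0 : R) :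
  a < x0 ->
  (forall x, a < x -> is_derive f x (f' x)) ->
  (forall x, a < x <= x0 -> 0 <= f' x) ->
  (forall x, x0 <= x -> f' x <= 0) ->
  forall x, a < x -> f x <= f x0.
Proof.
intros Hax0 Hder Hinc Hdec x Hax.
assert (Hmin : a < Rmin x x0) by (apply Rmin_glb_lt; assumption).
destruct (MVT_gen f x x0 f') as [y [Hy Hmvt]].
- intros y Hy; apply Hder; lra.
- intros y Hy; apply continuity_pt_filterlim, (@ex_derive_continuous R_AbsRing R_NormedModule).
  exists (f' y); apply Hder; lra.
- destruct (Rle_or_lt x x0) as [Hle | Hlt].
  + rewrite Rmax_right in Hy by lra.
    assert (0 <= f' y) by (apply Hinc; lra).
    nra.
  + rewrite Rmin_right in Hy by lra.
    assert (f' y <= 0) by (apply Hdec; lra).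
    nra.
Qed.

Section RationalCubic.

Variables a b p r : R.
Hypothesis a_pos : 0 < a.
Hypothesis p_ge0 : 0 <= p.
Hypothesis r_ge0 : 0 <= r.

Definition rat_cubic (g : R) : R := a / g + b - p * g - r * g ^ 2.

Lemma rat_cubic_decreasing x y : 0 < x -> x < y -> rat_cubic y < rat_cubic x.
Proof.
intros Hx Hxy; unfold rat_cubic.
assert (a / y < a / x).
{ apply Rmult_lt_compat_l; [assumption|]. apply Rinv_lt_contravar; nra. }
assert (p * x <= p * y) by (apply Rmult_le_compat_l; lra).
assert (r * x ^ 2 <= r * y ^ 2) by (apply Rmult_le_compat_l; [|simpl]; nra).
lra.
Qed.

Lemma rat_cubic_root : 0 < p -> exists z, 0 < z /\ rat_cubic z = 0.
Proof.
intro p_pos.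
set (poly g := a + b * g - p * g ^ 2 - r * g ^ 3).
assert (Hpoly : forall g, 0 < g -> poly g = g * rat_cubic g).
{ intros g Hg; unfold poly, rat_cubic; field; lra. }
(* At G the term - p G alone already outweighs a/G + b <= a + |b|. *)
set (G := 1 + (a + Rabs b) / p).
assert (HG : 1 <= G).
{ assert (0 <= (a + Rabs b) / p) by (apply Rdiv_le_0_compat; [pose proof (Rabs_pos b)|]; lra).
  unfold G; lra. }
assert (Hneg : rat_cubic G < 0).
{ unfold rat_cubic.
  assert (a / G <= a).
  { apply Rmult_le_reg_r with G; [lra|].
    unfold Rdiv; rewrite Rmult_assoc, Rinv_l by lra; nra. }
  assert (p * G = p + (a + Rabs b)) by (unfold G; field; lra).
  assert (b <= Rabs b) by apply Rle_abs.
  assert (0 <= r * G ^ 2) by (apply Rmult_le_pos; [|apply pow2_ge_0]; lra).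
  lra. }
destruct (IVT (fun g => - poly g) 0 G) as [z [Hz Hpz]].
- intros g; unfold poly; reg.
- lra.
- unfold poly; lra.
- rewrite Hpoly by lra; nra.
- assert (Hz0 : z <> 0) by (intros ->; unfold poly in Hpz; lra).
  exists z; split; [lra|].
  rewrite Hpoly in Hpz by lra.
  destruct (Rmult_integral z (rat_cubic z)); lra.
Qed.

End RationalCubic.

Section EllDerivativeNumerator.

Variables rho s eta eps c : R.
Hypothesis s_pos : 0 < s.
Hypothesis eta_pos : 0 < eta.
Hypothesis eps_gt1 : 1 < eps.
Hypothesis eps_le : eps <= 1 + rho.

Definition ell_deriv_num : R -> R :=
  rat_cubic (eps - 1) (2 * (eps - 1) * s - rho * s + rho * c - eta)
            (s ^ 2 * (rho - (eps - 1)) + 2 * eta * s) (eta * s ^ 2).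

Let a_pos : 0 < eps - 1. Proof. lra. Qed.
Let p_pos : 0 < s ^ 2 * (rho - (eps - 1)) + 2 * eta * s. Proof. nra. Qed.
Let r_ge0 : 0 <= eta * s ^ 2. Proof. nra. Qed.

Lemma ell_deriv_num_decreasing x y :
  0 < x -> x <= y -> ell_deriv_num y <= ell_deriv_num x.
Proof.
intros Hx [Hxy | <-]; [|lra].
left; apply rat_cubic_decreasing; [exact a_pos | lra | exact r_ge0 | lra..].
Qed.

Lemma ell_deriv_num_root : exists z, 0 < z /\ ell_deriv_num z = 0.
Proof. apply rat_cubic_root; [exact a_pos | exact r_ge0 | exact p_pos]. Qed.

Lemma ell_deriv_num_root_unique x y :
  0 < x -> 0 < y -> ell_deriv_num x = 0 -> ell_deriv_num y = 0 -> x = y.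
Proof.
intros Hx Hy Hnx Hny.
destruct (Rtotal_order x y) as [Hlt | [Heq | Hgt]]; [| assumption |].
- assert (ell_deriv_num y < ell_deriv_num x)
    by (apply rat_cubic_decreasing; [exact a_pos | lra | exact r_ge0 | lra..]).
  lra.
- assert (ell_deriv_num x < ell_deriv_num y)
    by (apply rat_cubic_decreasing; [exact a_pos | lra | exact r_ge0 | lra..]).
  lra.
Qed.

End EllDerivativeNumerator.

Lemma is_derive_ell rho s eta eps q g : 0 < s -> 0 < g ->
  is_derive (ell rho s eta eps q) g
    (ell_deriv_num rho s eta eps (Cmod q ^ 2) g / (1 + g * s) ^ 2).
Proof.
intros Hs Hg.
assert (/ g > 0) by (apply Rinv_0_lt_compat; lra).
unfold ell, ell_deriv_num, rat_cubic.
auto_derive.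
- repeat split; nra.
- field; repeat split; nra.
Qed.

Theorem proposition2 (rho s eta eps : R) (q : C) :
  (rho = 1/2 \/ rho = 1) -> 0 < s -> 0 < eta -> 1 < eps -> eps <= 1 + rho ->
  exists g0 : R,
    0 < g0 /\ is_derive (ell rho s eta eps q) g0 0 /\
    (forall g, 0 < g -> is_derive (ell rho s eta eps q) g 0 -> g = g0) /\
    (forall g, 0 < g -> ell rho s eta eps q g <= ell rho s eta eps q g0).
Proof.
intros _ Hs Heta Heps1 Heps2.
set (N := ell_deriv_num rho s eta eps (Cmod q ^ 2)).
assert (Hsq : forall g, 0 < g -> 0 < (1 + g * s) ^ 2) by (intros; nra).
destruct (ell_deriv_num_root rho s eta eps (Cmod q ^ 2)) as [g0 [Hg0 HN0]]; [assumption..|].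
fold N in HN0.
exists g0; split; [assumption|split; [|split]].
- replace 0 with (N g0 / (1 + g0 * s) ^ 2) by (rewrite HN0; field; nra).
  apply is_derive_ell; assumption.
- intros g Hg Hd.
  assert (Hd0 : N g / (1 + g * s) ^ 2 = 0).
  { rewrite <- (is_derive_unique _ _ _ Hd).
    exact (eq_sym (is_derive_unique _ _ _ (is_derive_ell rho s eta eps q g Hs Hg))). }
  refine (ell_deriv_num_root_unique rho s eta eps (Cmod q ^ 2) Hs Heta Heps1 Heps2
    g g0 Hg Hg0 _ HN0).
  pose proof (Rinv_0_lt_compat _ (Hsq g Hg)).
  unfold Rdiv in Hd0; change (N g = 0); nra.
- apply (derive_sign_change_max _ (fun g => N g / (1 + g * s) ^ 2) 0 g0 Hg0).
  + intros; apply is_derive_ell; assumption.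
  + intros x Hx; apply Rdiv_le_0_compat; [|apply Hsq; lra].
    rewrite <- HN0; apply ell_deriv_num_decreasing; lra.
  + intros x Hx.
    assert (N x <= 0) by (rewrite <- HN0; apply ell_deriv_num_decreasing; lra).
    assert (0 < / (1 + x * s) ^ 2) by (apply Rinv_0_lt_compat, Hsq; lra).
    unfold Rdiv; nra.
Qed.
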